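(* Let $\varepsilon>0$, $C>0$, and integers $1\le\hat d\le d$. Define the projected random sign (PRS) mechanism on input $\mathbf g\in\mathbb{R}^d$ as follows: draw a random matrix $\mathbf M=(m_{i,j})\in\mathbb{R}^{\hat d\times d}$ independently of everything else with i.i.d. entries equal to $-\sqrt3$ with probability $1/6$, $0$ with probability $2/3$, $+\sqrt3$ with probability $1/6$; set $\mathbf u=\mathbf M\mathbf g$; for each $i\in\{1,\dots,\hat d\}$ let $\bar u_i=\min\{C,\max\{-C,u_i\}\}$ and, independently across $i$, let $\tilde u_i=+C$ with probability $\frac{1}{e^{\varepsilon/\hat d}+1}+\frac{\bar u_i+C}{2C}\cdot\frac{e^{\varepsilon/\hat d}-1}{e^{\varepsilon/\hat d}+1}$ and $\tilde u_i=-C$ otherwise; output $\mathbf M^{\top}\tilde{\mathbf u}\in\mathbb{R}^d$. Consider $N$ agents with private parameters $\psi_1,\dots,\psi_N\in\Psi$ reporting in order $n=1,\dots,N$, where agent $n$ computes a gradient $\mathbf g_n\in\mathbb{R}^d$ whose conditional law given $\psi_1,\dots,\psi_N$ and previous reports $\tilde{\mathbf g}_1,\dots,\tilde{\mathbf g}_{n-1}$ depends only on $\psi_n$ and $\tilde{\mathbf g}_1,\dots,\tilde{\mathbf g}_{n-1}$, and reports $\tilde{\mathbf g}_n$ equal to the output of the PRS mechanism applied to $\mathbf g_n$ with fresh randomness. Then gradient submission with the PRS mechanism satisfies $\varepsilon$-LDP: for every $n$, all $\psi,\psi'\in\Psi$, every value of $(\tilde{\mathbf g}_1,\dots,\tilde{\mathbf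 g}_{n-1})$ and every measurable $G\subseteq\mathbb{R}^d$, $$\Pr(\tilde{\mathbf g}_n\in G\mid\psi_n=\psi,\tilde{\mathbf g}_1,\dots,\tilde{\mathbf g}_{n-1})\le e^{\varepsilon}\Pr(\tilde{\mathbf g}_n\in G\mid\psi_n=\psi',\tilde{\mathbf g}_1,\dots,\tilde{\mathbf g}_{n-1}).$$
   Context: $\Psi$ is an arbitrary set of environment parameters. *)

From HB Require Import structures.
From mathcomp Require Import all_boot all_order all_algebra.
From mathcomp Require Import all_classical all_reals all_analysis.
Set Implicit Arguments. Unset Strict Implicit. Unset Printing Implicit Defensive.
Import Order.TTheory GRing.Theory Num.Theory.
Import numFieldNormedType.Exports.
Local Open Scope classical_set_scope.
Local Open Scope ring_scope.

Definition Rd (R : realType) (d : nat) := g_sigma_algebraType (@open 'rV[R]_d).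

(* Entries of the projection matrix M are encoded by 'I_3:
   0 |-> -sqrt 3 (prob 1/6), 1 |-> 0 (prob 2/3), 2 |-> +sqrt 3 (prob 1/6). *)
Definition mval (R : realType) (k : 'I_3) : R :=
  if val k == 0%N then - Num.sqrt 3 else if val k == 1%N then 0 else Num.sqrt 3.
Definition mprob (R : realType) (k : 'I_3) : R :=
  if val k == 1%N then 2 / 3 else 1 / 6.

Definition real_mx (R : realType) (dh d : nat) (M : 'M['I_3]_(dh, d)) : 'M[R]_(dh, d) :=
  map_mx (@mval R) M.

Definition mx_prob (R : realType) (dh d : nat) (M : 'M['I_3]_(dh, d)) : R :=
  \prod_(i < dh) \prod_(j < d) mprob R (M i j).

Definition clip (R : realType) (C x : R) : R := Num.min C (Num.max (- C) x).

Definition p_plus (R : realType) (eps C : R) (dh : nat) (ui : R) : R :=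
  let e := expR (eps / dh%:R) in
  1 / (e + 1) + (clip C ui + C) / (2 * C) * ((e - 1) / (e + 1)).

Definition sign_vec (R : realType) (dh : nat) (C : R) (s : 'rV[bool]_dh) : 'rV[R]_dh :=
  \row_i (if s 0 i then C else - C).

(* The PRS mechanism on input g: probability that its output
   M^T tilde u lies in G.  Vectors are rows: u = M g is written g *m M^T,
   and M^T tilde u is written tilde u *m M. *)
Definition prs_prob (R : realType) (eps C : R) (dh d : nat)
    (g : 'rV[R]_d) (G : set 'rV[R]_d) : R :=
  \sum_(M : 'M['I_3]_(dh, d))
    \sum_(s : 'rV[bool]_dh)
      let Mr := real_mx R M in
      let u := g *m Mr^T in
      mx_prob R M
      * (\prod_(i < dh) (if s 0 i then p_plus eps C dh (u 0 i)
                         else 1 - p_plus eps C dh (u 0 i)))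
      * \1_G (sign_vec C s *m Mr).

(* K n psi h is the conditional law of agent n's
   gradient g_n given psi_n = psi and previous reports h = (tilde g_1, ...,
   tilde g_{n-1}) (agents indexed from 0, so agent n has n predecessors). *)
Definition report_cond_prob (R : realType) (eps C : R) (dh d N : nat)
    (Psi : Type)
    (K : forall n : 'I_N, Psi -> n.-tuple 'rV[R]_d -> probability (Rd R d) R)
    (n : 'I_N) (psi : Psi) (h : n.-tuple 'rV[R]_d) (G : set 'rV[R]_d) : \bar R :=
  (\int[K n psi h]_g (prs_prob eps C dh g G)%:E)%E.

From HB Require Import structures.
From mathcomp Require Import all_boot all_order all_algebra.
From mathcomp Require Import all_classical all_reals all_analysis.
From mathcomp Require Import ring lra.
Set Implicit Arguments.
Unset Strict Implicit.
Unset Printing Implicit Defensive.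

Import Order.TTheory GRing.Theory Num.Theory.
Import numFieldNormedType.Exports.
Local Open Scope classical_set_scope.
Local Open Scope ring_scope.

(* Each of the dh random signs is a randomized response with ratio
   e := exp(eps/dh): whatever the input, both signs have probability in
   [a, e a] with a := 1/(e+1).  So for every matrix M and sign vector s the
   probability of drawing s lies in [a^dh, e^eps a^dh], and the output
   probability of the mechanism lies in [A, e^eps A] for some A independent of
   the input gradient.  Averaging over any law of the gradient stays in
   [A, e^eps A], so two such averages differ by a factor at most e^eps. *)

Lemma rr_prob_bounds (R : realFieldType) (e t : R) : 1 <= e -> 0 <= t <= 1 ->
  1 / (e + 1) <= 1 / (e + 1) + t * ((e - 1) / (e + 1)) <= e * (1 / (e + 1)).
Proof.
move=> e1 /andP[t0 t1].
have -> : (e - 1) / (e + 1) = (e - 1) * (1 / (e + 1)) by rewrite div1r.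
set a := 1 / (e + 1).
have a0 : 0 <= a by rewrite divr_ge0 //; lra.
have e1_ge0 : 0 <= e - 1 by rewrite subr_ge0.
have bump0 : 0 <= t * ((e - 1) * a) by do 2 apply: mulr_ge0 => //.
have bump_le : t * ((e - 1) * a) <= (e - 1) * a.
  by rewrite ler_piMl // mulr_ge0.
have -> : e * a = a + (e - 1) * a by ring.
by apply/andP; split; lra.
Qed.

Lemma rr_compl_prob_bounds (R : realFieldType) (e t : R) : 1 <= e -> 0 <= t <= 1 ->
  1 / (e + 1) <= 1 - (1 / (e + 1) + t * ((e - 1) / (e + 1))) <= e * (1 / (e + 1)).
Proof.
move=> e1 /andP[t0 t1].
have -> : 1 - (1 / (e + 1) + t * ((e - 1) / (e + 1)))
          = 1 / (e + 1) + (1 - t) * ((e - 1) / (e + 1)).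
  by field; rewrite lt0r_neq0 //; lra.
by apply: rr_prob_bounds => //; apply/andP; split; lra.
Qed.

Lemma clip_itv (R : realType) (C x : R) : 0 <= C -> - C <= clip C x <= C.
Proof.
by move=> C0; rewrite /clip ge_min le_min le_max !lexx !andbT; lra.
Qed.

Lemma mx_prob_ge0 (R : realType) (dh d : nat) (M : 'M['I_3]_(dh, d)) :
  0 <= mx_prob R M.
Proof.
apply: prodr_ge0 => i _; apply: prodr_ge0 => j _.
by rewrite /mprob; case: ifP.
Qed.

Section prs_prob_bounds.
Variables (R : realType) (eps C : R) (dh : nat).
Hypotheses (eps_ge0 : 0 <= eps) (C_gt0 : 0 < C).

Local Notation e := (expR (eps / dh%:R)).
Local Notation a := (1 / (e + 1)).

Lemma p_plus_bounds (x : R) (b : bool) :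
  a <= (if b then p_plus eps C dh x else 1 - p_plus eps C dh x) <= e * a.
Proof.
have e1 : 1 <= e by rewrite -expR0 ler_expR divr_ge0.
have /andP[clip_ge clip_le] := clip_itv x (ltW C_gt0).
have t01 : 0 <= (clip C x + C) / (2 * C) <= 1.
  apply/andP; split; first by rewrite divr_ge0 //; lra.
  by rewrite ler_pdivrMr ?mulr_gt0 //; lra.
by case: b; [apply: rr_prob_bounds | apply: rr_compl_prob_bounds].
Qed.

Hypothesis dh_gt0 : (0 < dh)%N.

Lemma sign_prob_bounds (u : 'rV[R]_dh) (s : 'rV[bool]_dh) :
  a ^+ dh <= \prod_(i < dh) (if s 0 i then p_plus eps C dh (u 0 i)
                             else 1 - p_plus eps C dh (u 0 i))
          <= expR eps * a ^+ dh.
Proof.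
have a0 : 0 <= a by rewrite divr_ge0 // addr_ge0 // expR_ge0.
have -> : expR eps = e ^+ dh by rewrite -expRM_natr mulfVK // pnatr_eq0 -lt0n.
have pow_prod (y : R) : y ^+ dh = \prod_(i < dh) y by rewrite prodr_const card_ord.
rewrite -exprMn !pow_prod.
apply/andP; split; apply: ler_prod => i _;
  have /andP[lo hi] := p_plus_bounds (u 0 i) (s 0 i).
- by rewrite a0 lo.
- by rewrite hi (le_trans a0 lo).
Qed.

Definition prs_floor (d : nat) (G : set 'rV[R]_d) : R :=
  \sum_(M : 'M['I_3]_(dh, d)) \sum_(s : 'rV[bool]_dh)
    mx_prob R M * a ^+ dh * \1_G (sign_vec C s *m real_mx R M).

Lemma prs_floor_ge0 (d : nat) (G : set 'rV[R]_d) : 0 <= prs_floor G.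
Proof.
apply: sumr_ge0 => M _; apply: sumr_ge0 => s _.
by rewrite !mulr_ge0 ?mx_prob_ge0.
Qed.

Lemma prs_prob_bounds (d : nat) (G : set 'rV[R]_d) (g : 'rV[R]_d) :
  prs_floor G <= prs_prob eps C dh g G <= expR eps * prs_floor G.
Proof.
rewrite /prs_floor /prs_prob mulr_sumr.
apply/andP; split; apply: ler_sum => M _; rewrite ?mulr_sumr;
  apply: ler_sum => s _ /=;
  have /andP[lo hi] := sign_prob_bounds (g *m (real_mx R M)^T) s;
  have ind0 : 0 <= \1_G (sign_vec C s *m real_mx R M) :> R by rewrite indicE.
- by rewrite ler_wpM2r // ler_wpM2l ?mx_prob_ge0.
- by rewrite mulrA mulrCA ler_wpM2r // ler_wpM2l ?mx_prob_ge0.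
Qed.

End prs_prob_bounds.

Section integral_bounds.
Local Open Scope ereal_scope.
Variables (d : measure_display) (T : measurableType d) (R : realType).

Lemma ge0_le_integralT (mu : {measure set T -> \bar R}) (f g : T -> \bar R) :
  (forall x, 0 <= f x) -> (forall x, f x <= g x) ->
  \int[mu]_x f x <= \int[mu]_x g x.
Proof.
move=> f0 fg; have g0 x : 0 <= g x := le_trans (f0 x) (fg x).
rewrite !ge0_integralTE //; apply: ereal_sup_le => _ [h hf <-].
by exists h => //= x; exact: le_trans (hf x) (fg x).
Qed.

Lemma integral_prob_bounds (P : probability T R) (f : T -> R) (lo hi : R) :
  (0 <= lo)%R -> (forall x, lo <= f x <= hi)%R ->
  lo%:E <= \int[P]_x (f x)%:E <= hi%:E.
Proof.
move=> lo0 flohi.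
have int_cst (r : R) : \int[P]_x (cst r%:E) x = r%:E.
  by rewrite integral_cst // -[RHS]mule1; congr (_ * _); exact: probability_setT.
apply/andP; split.
- rewrite -[leLHS]int_cst; apply: ge0_le_integralT => x /=; rewrite lee_fin //.
  by case/andP: (flohi x).
- rewrite -[leRHS]int_cst; apply: ge0_le_integralT => x /=; rewrite lee_fin;
    have /andP[flo fhi] := flohi x => //.
  exact: le_trans flo.
Qed.

Lemma le_integral_prob_ratio (P Q : probability T R) (f : T -> R) (A c : R) :
  (0 <= A)%R -> (0 <= c)%R -> (forall x, A <= f x <= c * A)%R ->
  \int[P]_x (f x)%:E <= c%:E * \int[Q]_x (f x)%:E.
Proof.
move=> A0 c0 fA.
have /andP[_ P_le] := integral_prob_bounds P A0 fA.
have /andP[Q_ge _] := integral_prob_bounds Q A0 fA.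
by rewrite (le_trans P_le) // EFinM lee_wpmul2l ?lee_fin.
Qed.

End integral_bounds.

Theorem lemma3 (R : realType) (eps C : R) (dh d N : nat) (Psi : Type)
    (K : forall n : 'I_N, Psi -> n.-tuple 'rV[R]_d -> probability (Rd R d) R) :
  0 < eps -> 0 < C -> (1 <= dh)%N -> (dh <= d)%N ->
  forall (n : 'I_N) (psi psi' : Psi) (h : n.-tuple 'rV[R]_d) (G : set (Rd R d)),
    measurable G ->
    (report_cond_prob eps C dh K psi h G
       <= (expR eps)%:E * report_cond_prob eps C dh K psi' h G)%E.
Proof.
move=> eps_gt0 C_gt0 dh_gt0 _ n psi psi' h G _.
apply: le_integral_prob_ratio (prs_floor_ge0 eps C dh G) (expR_ge0 eps) _.
by move=> g; apply: prs_prob_bounds => //; exact: ltW.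
Qed.
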